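(* Let $M\in\mathbb R^{\mathbb N\times\mathbb N}$ belong to the Jaffard class $\mathcal J(d,\gamma,C)$ and be elliptic, i.e., there is $C_{\rm ell}>0$ with $Mx\cdot x\ge C_{\rm ell}\|x\|_{\ell_2}^2$ for all $x\in\ell_2$. Then $M$ has an $LU$-factorization $M=LU$ with $L$ lower triangular ($L_{ij}=0$ for $i<j$) and $U$ upper triangular ($U_{ij}=0$ for $i>j$) such that the entrywise moduli $|L|,|U|,|L^{-1}|,|U^{-1}|:\ell_2\to\ell_2$ are bounded operators.
   Context: Jaffard class: for a metric $d:\mathbb N\times\mathbb N\to[0,\infty)$ with $\sup_{i\in\mathbb N}\sum_{j\in\mathbb N}\exp(-\varepsilon d(i,j))<\infty$ for every $\varepsilon>0$, and $\gamma>0$, a matrix $M$ belongs to $\mathcal J(d,\gamma,C)$ if for every $0<\gamma'<\gamma$ there exists $C(\gamma')>0$ with $|M_{ij}|\le C(\gamma')\exp(-\gamma' d(i,j))$ for all $i,j$. *)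

From Stdlib Require Import Reals.
From Coquelicot Require Import Coquelicot.
Open Scope R_scope.

Definition mat := nat -> nat -> R.
Definition vec := nat -> R.

Definition is_metric (d : nat -> nat -> R) : Prop :=
  (forall i j, 0 <= d i j) /\
  (forall i j, d i j = 0 <-> i = j) /\
  (forall i j, d i j = d j i) /\
  (forall i j k, d i k <= d i j + d j k).

Definition summable_metric (d : nat -> nat -> R) : Prop :=
  forall eps, 0 < eps ->
    exists K, forall i,
      ex_series (fun j => exp (- eps * d i j)) /\
      Series (fun j => exp (- eps * d i j)) <= K.

Definition jaffard (d : nat -> nat -> R) (gamma : R) (M : mat) : Prop :=
  forall gamma', 0 < gamma' < gamma ->
    exists C, 0 < C /\
      forall i j, Rabs (M i j) <= C * exp (- gamma' * d i j).

Definition in_l2 (x : vec) : Prop := ex_series (fun j => x j ^ 2).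
Definition l2norm2 (x : vec) : R := Series (fun j => x j ^ 2).

Definition mat_app (M : mat) (x : vec) : vec :=
  fun i => Series (fun j => M i j * x j).

Definition elliptic (M : mat) (c : R) : Prop :=
  forall x, in_l2 x ->
    Series (fun i => mat_app M x i * x i) >= c * l2norm2 x.

Definition bounded_l2 (A : mat) : Prop :=
  exists C, forall x, in_l2 x ->
    (forall i, ex_series (fun j => A i j * x j)) /\
    in_l2 (mat_app A x) /\
    l2norm2 (mat_app A x) <= C * l2norm2 x.

Definition absm (A : mat) : mat := fun i j => Rabs (A i j).

Definition matmul (A B : mat) : mat := fun i j => Series (fun k => A i k * B k j).

Definition idm : mat := fun i j => if Nat.eqb i j then 1 else 0.

Definition lower_tri (L : mat) : Prop := forall i j, (i < j)%nat -> L i j = 0.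
Definition upper_tri (U : mat) : Prop := forall i j, (j < i)%nat -> U i j = 0.

Definition is_inverse (A Ainv : mat) : Prop :=
  (forall i j, matmul A Ainv i j = idm i j) /\
  (forall i j, matmul Ainv A i j = idm i j).

From Stdlib Require Import Reals Lra Lia.
From Coquelicot Require Import Coquelicot.
Open Scope R_scope.

(* Gaussian elimination never breaks down: eliminating one variable of a form that is coercive
   with constant c leaves a Schur complement that is again coercive with constant c, so every
   pivot is at least c and M = LU with L unit lower and U upper triangular.  The inverses of L
   and U are computed by substitution, and each column of U^-1 (row of L^-1) solves a finite
   section system M_n y = r e_m.  Conjugating M_n by the weight exp (eps d(., m)) perturbs it by
   O(eps) in the Schur norm, so for small eps it stays coercive with constant c/2, which bounds
   the weighted solution (Combes-Thomas): U^-1 and L^-1 decay exponentially.  Then L = M U^-1 and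
   U = L^-1 M decay as products of decaying matrices, and the Schur test makes |X| bounded on l2
   for every exponentially decaying X. *)

Fixpoint fsum (n : nat) (f : nat -> R) : R :=
  match n with O => 0 | S n' => fsum n' f + f n' end.

Lemma fsum_ext n f g : (forall k, (k < n)%nat -> f k = g k) -> fsum n f = fsum n g.
Proof.
  induction n; simpl; intros H; auto.
  rewrite IHn, H; auto; intros; apply H; lia.
Qed.

Lemma fsum_plus n f g : fsum n (fun k => f k + g k) = fsum n f + fsum n g.
Proof. induction n; simpl; [lra | rewrite IHn; lra]. Qed.

Lemma fsum_scal_l n c f : fsum n (fun k => c * f k) = c * fsum n f.
Proof. induction n; simpl; [lra | rewrite IHn; lra]. Qed.

Lemma fsum_scal_r n c f : fsum n (fun k => f k * c) = fsum n f * c.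
Proof. induction n; simpl; [lra | rewrite IHn; lra]. Qed.

Lemma fsum_le n f g : (forall k, (k < n)%nat -> f k <= g k) -> fsum n f <= fsum n g.
Proof.
  induction n; simpl; intros H; [lra|].
  specialize (IHn (fun k Hk => H k ltac:(lia))); specialize (H n ltac:(lia)); lra.
Qed.

Lemma fsum_zero n f : (forall k, (k < n)%nat -> f k = 0) -> fsum n f = 0.
Proof. induction n; simpl; intros H; [lra|]. rewrite IHn, H by (auto; lia). lra. Qed.

Lemma fsum_nonneg n f : (forall k, (k < n)%nat -> 0 <= f k) -> 0 <= fsum n f.
Proof. intros H. rewrite <- (fsum_zero n (fun _ => 0)) by auto. apply fsum_le; auto. Qed.

Lemma fsum_abs n f : Rabs (fsum n f) <= fsum n (fun k => Rabs (f k)).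
Proof.
  induction n; simpl; [rewrite Rabs_R0; lra|].
  eapply Rle_trans; [apply Rabs_triang | lra].
Qed.

Lemma fsum_swap n m f :
  fsum n (fun i => fsum m (fun j => f i j)) = fsum m (fun j => fsum n (fun i => f i j)).
Proof.
  induction n; simpl; [rewrite fsum_zero; auto|].
  rewrite IHn, <- fsum_plus; reflexivity.
Qed.

Lemma fsum_term_le n f k : (k < n)%nat -> (forall l, 0 <= f l) -> f k <= fsum n f.
Proof.
  intros Hk Hf; induction n; [lia|]; simpl.
  destruct (Nat.eq_dec k n) as [->|].
  - pose proof (fsum_nonneg n f (fun l _ => Hf l)); lra.
  - specialize (IHn ltac:(lia)); specialize (Hf n); lra.
Qed.

Lemma fsum_mul_idm_r n m f : ((n <= m)%nat -> f m = 0) ->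
  fsum n (fun k => f k * idm k m) = f m.
Proof.
  intros Hout; induction n; simpl; [rewrite Hout by lia; auto|].
  unfold idm at 2; destruct (Nat.eqb_spec n m) as [->|].
  - rewrite fsum_zero; [ring|]. intros k Hk; unfold idm.
    destruct (Nat.eqb_spec k m); [lia | ring].
  - rewrite IHn by (intros; apply Hout; lia); ring.
Qed.

Lemma fsum_mul_idm_l n m f : ((n <= m)%nat -> f m = 0) ->
  fsum n (fun k => idm m k * f k) = f m.
Proof.
  intros Hout; rewrite <- (fsum_mul_idm_r n m f Hout). apply fsum_ext; intros k _.
  unfold idm; rewrite Nat.eqb_sym; ring.
Qed.

Lemma sum_n_fsum a N : sum_n a N = fsum (S N) a.
Proof. induction N; [rewrite sum_O; simpl; lra | rewrite sum_Sn, IHN; reflexivity]. Qed.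

Lemma is_series_fsum n a : (forall k, (n <= k)%nat -> a k = 0) -> is_series a (fsum n a).
Proof.
  intros H. change (is_lim_seq (sum_n a) (fsum n a)).
  apply is_lim_seq_ext_loc with (u := fun _ => fsum n a); [|apply is_lim_seq_const].
  exists n; intros N HN; rewrite sum_n_fsum.
  induction HN; simpl; [rewrite H by lia; lra|].
  simpl in IHHN; rewrite (H (S m)) by lia; lra.
Qed.

Lemma Series_fsum n a : (forall k, (n <= k)%nat -> a k = 0) -> Series a = fsum n a.
Proof. intros H; apply is_series_unique, is_series_fsum, H. Qed.

Lemma ex_series_fsum n a : (forall k, (n <= k)%nat -> a k = 0) -> ex_series a.
Proof. intros H; eexists; apply is_series_fsum, H. Qed.

Lemma matmul_fsum A B i j n : (forall l, (n <= l)%nat -> A i l * B l j = 0) ->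
  matmul A B i j = fsum n (fun l => A i l * B l j).
Proof. intros H; apply Series_fsum, H. Qed.

Lemma Series_nonneg a : (forall k, 0 <= a k) -> ex_series a -> 0 <= Series a.
Proof.
  intros Ha Hex. apply Rle_trans with (Series (fun _ => 0)).
  - right; symmetry; apply (Series_fsum 0); auto.
  - apply Series_le; auto; intros k; split; [lra | apply Ha].
Qed.

Lemma fsum_le_Series n a : (forall k, 0 <= a k) -> ex_series a -> fsum n a <= Series a.
Proof.
  intros Ha Hex. destruct n as [|n]; [apply Series_nonneg; auto|].
  rewrite (Series_incr_n a (S n)) by (auto; lia). simpl pred.
  rewrite <- sum_n_Reals, sum_n_fsum.
  pose proof (Series_nonneg (fun k => a (S n + k)%nat) (fun k => Ha _)
    (proj1 (ex_series_incr_n a (S n)) Hex)); lra.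
Qed.

Lemma ex_series_fsum_bounded a B : (forall k, 0 <= a k) -> (forall n, fsum n a <= B) ->
  ex_series a /\ Series a <= B.
Proof.
  intros Ha HB.
  destruct (ex_finite_lim_seq_incr (sum_n a) B) as [l Hl].
  - intros n; rewrite !sum_n_fsum; simpl; specialize (Ha (S n)); lra.
  - intros n; rewrite sum_n_fsum; auto.
  - split; [exists l; exact Hl|].
    rewrite (is_series_unique a l Hl).
    apply (is_lim_seq_le (sum_n a) (fun _ => B) l B); auto using is_lim_seq_const.
    intros n; rewrite sum_n_fsum; auto.
Qed.

Lemma Series_fsum_swap N (f : nat -> nat -> R) : (forall i, ex_series (f i)) ->
  ex_series (fun j => fsum N (fun i => f i j)) /\
  Series (fun j => fsum N (fun i => f i j)) = fsum N (fun i => Series (f i)).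
Proof.
  intros H; induction N as [|N [E1 E2]]; simpl.
  - split; [apply (ex_series_fsum 0) | apply (Series_fsum 0)]; auto.
  - split; [apply (ex_series_plus _ _ E1 (H N))|].
    rewrite Series_plus, E2; auto.
Qed.

(** * Gaussian elimination of coercive forms *)

Definition qform (A : mat) (n : nat) (x : vec) : R :=
  fsum n (fun i => fsum n (fun j => A i j * x j) * x i).

Definition sqnorm (n : nat) (x : vec) : R := fsum n (fun i => x i ^ 2).

Definition coercive (A : mat) (n : nat) (c : R) : Prop :=
  forall x, qform A n x >= c * sqnorm n x.

Definition coercive_from (A : mat) (k : nat) (c : R) : Prop :=
  forall n x, (forall l, (l < k)%nat -> x l = 0) -> qform A n x >= c * sqnorm n x.

Definition trans (A : mat) : mat := fun i j => A j i.

Lemma elliptic_coercive M c : elliptic M c -> forall n, coercive M n c.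
Proof.
  intros H n x. set (x' := fun l => if (l <? n)%nat then x l else 0).
  assert (Hout : forall l, (n <= l)%nat -> x' l = 0)
    by (intros l Hl; unfold x'; destruct (Nat.ltb_spec l n); [lia | auto]).
  assert (Hin : forall l, (l < n)%nat -> x' l = x l)
    by (intros l Hl; unfold x'; destruct (Nat.ltb_spec l n); [auto | lia]).
  assert (Happ : forall i, mat_app M x' i = fsum n (fun j => M i j * x j)).
  { intros i; unfold mat_app; rewrite (Series_fsum n).
    - apply fsum_ext; intros; rewrite Hin; auto.
    - intros; rewrite Hout; auto; ring. }
  assert (Hl2 : in_l2 x') by (apply (ex_series_fsum n); intros; rewrite Hout; auto; ring).
  specialize (H x' Hl2).
  unfold l2norm2 in H; rewrite !(Series_fsum n) in H by (intros; rewrite Hout; auto; ring).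
  unfold qform, sqnorm.
  rewrite (fsum_ext n _ (fun i => mat_app M x' i * x' i)) by (intros; rewrite Happ, Hin; auto).
  rewrite (fsum_ext n (fun i => x i ^ 2) (fun i => x' i ^ 2)) by (intros; rewrite Hin; auto).
  exact H.
Qed.

Lemma qform_trans A n x : qform (trans A) n x = qform A n x.
Proof.
  unfold qform, trans.
  rewrite (fsum_ext n _ (fun i => fsum n (fun j => A j i * x j * x i)))
    by (intros; rewrite fsum_scal_r; auto).
  rewrite fsum_swap. apply fsum_ext; intros j _.
  rewrite <- fsum_scal_r; apply fsum_ext; intros; ring.
Qed.

Lemma coercive_trans A n c : coercive A n c -> coercive (trans A) n c.
Proof. intros H x; rewrite qform_trans; apply H. Qed.

Lemma coercive_from_diag A k c : coercive_from A k c -> A k k >= c.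
Proof.
  intros H. specialize (H (S k) (fun l => idm l k)).
  unfold qform, sqnorm in H.
  rewrite (fsum_ext _ _ (fun i => A i k * idm i k)) in H.
  2:{ intros i _; rewrite fsum_mul_idm_r by (intros; lia); unfold idm.
      destruct (Nat.eqb i k); ring. }
  rewrite (fsum_ext _ (fun i => idm i k ^ 2) (fun i => 1 * idm i k)) in H
    by (intros i _; unfold idm; destruct (Nat.eqb i k); ring).
  rewrite !fsum_mul_idm_r in H by (intros; lia).
  apply Rge_trans with (c * 1); [apply H | lra].
  intros l Hl; unfold idm; destruct (Nat.eqb_spec l k); [lia | auto].
Qed.

Definition schur_step (A : mat) (k : nat) : mat := fun i j => A i j - A i k * A k j / A k k.

Fixpoint schur (M : mat) (k : nat) : mat :=
  match k with O => M | S k => schur_step (schur M k) k end.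

(* The Schur complement form is the original form at [x] moved along [e_k] to its minimum. *)
Lemma qform_schur_step A k n x : A k k <> 0 -> (k < n)%nat ->
  qform (schur_step A k) n x =
  qform A n (fun l => x l - fsum n (fun j => A k j * x j) / A k k * idm l k).
Proof.
  intros Ha Hk. unfold qform.
  set (b := fsum n (fun j => A k j * x j)); set (c := fsum n (fun i => A i k * x i)).
  transitivity (fsum n (fun i => fsum n (fun j => A i j * x j) * x i) - b * c / A k k).
  - rewrite (fsum_ext n _ (fun i => fsum n (fun j => A i j * x j) * x i
                                    + (- (b / A k k)) * (A i k * x i))).
    { rewrite fsum_plus, fsum_scal_l; fold c; field; auto. }
    intros i _; unfold schur_step.
    rewrite (fsum_ext _ _ (fun j => A i j * x j + (- (A i k / A k k)) * (A k j * x j)))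
      by (intros; field; auto).
    rewrite fsum_plus, fsum_scal_l; fold b; field; auto.
  - symmetry. rewrite (fsum_ext n _ (fun i => fsum n (fun j => A i j * x j) * x i
        + (- (b / A k k)) * (A i k * x i)
        + (- (b / A k k)) * (idm k i * fsum n (fun j => A i j * x j))
        + (b / A k k) ^ 2 * (idm k i * A i k))).
    { rewrite !fsum_plus, !fsum_scal_l, !fsum_mul_idm_l by (intros; lia).
      fold b c; field; auto. }
    intros i _.
    rewrite (fsum_ext _ _ (fun j => A i j * x j + (- (b / A k k)) * (A i j * idm j k)))
      by (intros; ring).
    rewrite fsum_plus, fsum_scal_l, fsum_mul_idm_r by (intros; lia).
    unfold idm; destruct (Nat.eqb_spec i k), (Nat.eqb_spec k i); subst; try lia; ring.
Qed.

Lemma coercive_from_schur_step A k c : coercive_from A k c -> 0 < c ->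
  coercive_from (schur_step A k) (S k) c.
Proof.
  intros H Hc n x Hx. pose proof (coercive_from_diag A k c H) as Hkk.
  destruct (Nat.le_gt_cases n k) as [Hn | Hn].
  - unfold qform, sqnorm.
    rewrite (fsum_zero n (fun i => _ * x i)), (fsum_zero n (fun i => x i ^ 2)); [lra | |];
      intros i Hi; rewrite Hx by lia; ring.
  - rewrite qform_schur_step by (auto; lra).
    eapply Rge_trans; [apply H|].
    + intros l Hl; rewrite Hx by lia; unfold idm; destruct (Nat.eqb_spec l k); [lia | ring].
    + apply Rle_ge, Rmult_le_compat_l; [lra|]. apply fsum_le; intros l _.
      unfold idm; destruct (Nat.eqb_spec l k) as [->|]; [rewrite Hx by lia|]; nra.
Qed.

Lemma coercive_from_schur M c k : 0 < c -> coercive_from M 0 c -> coercive_from (schur M k) k c.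
Proof. intros Hc H0; induction k; simpl; auto using coercive_from_schur_step. Qed.

(* Doolittle factors: the pivot columns and rows of the successive Schur complements. *)
Definition Lfac (M : mat) : mat := fun i j =>
  if (i <? j)%nat then 0 else if (i =? j)%nat then 1 else schur M j i j / schur M j j j.

Definition Ufac (M : mat) : mat := fun i j => if (j <? i)%nat then 0 else schur M i i j.

Lemma Lfac_lower M : lower_tri (Lfac M).
Proof. intros i j H; unfold Lfac; destruct (Nat.ltb_spec i j); [auto | lia]. Qed.

Lemma Ufac_upper M : upper_tri (Ufac M).
Proof. intros i j H; unfold Ufac; destruct (Nat.ltb_spec j i); [auto | lia]. Qed.

Lemma Lfac_diag M i : Lfac M i i = 1.
Proof. unfold Lfac; rewrite Nat.ltb_irrefl, Nat.eqb_refl; auto. Qed.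

Lemma Ufac_diag M i : Ufac M i i = schur M i i i.
Proof. unfold Ufac; rewrite Nat.ltb_irrefl; auto. Qed.

Lemma schur_telescope M k i j : (k <= i)%nat -> (k <= j)%nat ->
  M i j = fsum k (fun l => Lfac M i l * Ufac M l j) + schur M k i j.
Proof.
  induction k; intros Hi Hj; simpl; [lra|].
  rewrite IHk by lia. unfold Lfac, Ufac, schur_step.
  destruct (Nat.ltb_spec i k), (Nat.eqb_spec i k), (Nat.ltb_spec j k); try lia.
  unfold Rdiv; ring.
Qed.

Lemma Lfac_Ufac M : (forall k, schur M k k k <> 0) ->
  forall i j, M i j = matmul (Lfac M) (Ufac M) i j.
Proof.
  intros Hpiv i j. destruct (Nat.le_gt_cases i j) as [Hij | Hij].
  - rewrite (matmul_fsum _ _ _ _ (S i)) by (intros; rewrite Lfac_lower by lia; ring).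
    simpl; rewrite (schur_telescope M i i j), Lfac_diag by lia.
    unfold Ufac; destruct (Nat.ltb_spec j i); [lia | ring].
  - rewrite (matmul_fsum _ _ _ _ (S j)) by (intros; rewrite Ufac_upper by lia; ring).
    simpl; rewrite (schur_telescope M j i j), Ufac_diag by lia.
    unfold Lfac; destruct (Nat.ltb_spec i j), (Nat.eqb_spec i j); try lia.
    field; auto.
Qed.

(** * Inverses of triangular matrices *)

Definition subst_row (T P : mat) (i : nat) : vec :=
  fun j => (idm i j - fsum i (fun l => T i l * P l j)) / T i i.

(* [subst_rows T n] holds the first [n] rows of the inverse, computed by forward substitution. *)
Fixpoint subst_rows (T : mat) (n : nat) : mat :=
  match n with
  | O => fun _ _ => 0
  | S n' => fun k j => if (k =? n')%nat then subst_row T (subst_rows T n') n' j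
                       else subst_rows T n' k j
  end.

Definition lower_inv (T : mat) : mat := fun i j => subst_rows T (S i) i j.

Definition upper_inv (U : mat) : mat := trans (lower_inv (trans U)).

Lemma subst_rows_lower_inv T n k j : (k < n)%nat -> subst_rows T n k j = lower_inv T k j.
Proof.
  induction n; intros H; [lia|]; simpl.
  destruct (Nat.eqb_spec k n) as [->|]; [|apply IHn; lia].
  unfold lower_inv; simpl; rewrite Nat.eqb_refl; auto.
Qed.

Lemma lower_inv_row T i j : T i i <> 0 ->
  lower_inv T i j * T i i + fsum i (fun l => T i l * lower_inv T l j) = idm i j.
Proof.
  intros H. unfold lower_inv at 1; simpl; rewrite Nat.eqb_refl; unfold subst_row.
  rewrite (fsum_ext i _ (fun l => T i l * lower_inv T l j))
    by (intros; rewrite subst_rows_lower_inv; auto).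
  field; auto.
Qed.

Section LowerInverse.

Variable T : mat.
Hypothesis T_diag : forall i, T i i <> 0.

Lemma lower_inv_lower : lower_tri (lower_inv T).
Proof.
  intros i; induction i as [i IH] using (well_founded_induction Wf_nat.lt_wf); intros j Hij.
  pose proof (lower_inv_row T i j (T_diag i)) as E.
  rewrite fsum_zero in E by (intros l Hl; rewrite (IH l Hl j) by lia; ring).
  unfold idm in E; destruct (Nat.eqb_spec i j); [lia|].
  rewrite Rplus_0_r in E; pose proof (T_diag i); apply Rmult_integral in E as [E|E]; lra.
Qed.

Lemma lower_inv_diag i : lower_inv T i i = / T i i.
Proof.
  pose proof (lower_inv_row T i i (T_diag i)) as E.
  rewrite fsum_zero in E by (intros l Hl; rewrite lower_inv_lower by lia; ring).
  unfold idm in E; rewrite Nat.eqb_refl in E.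
  pose proof (T_diag i); field_simplify_eq; lra.
Qed.

Lemma lower_inv_right : lower_tri T -> forall i j, matmul T (lower_inv T) i j = idm i j.
Proof.
  intros Hl i j. rewrite (matmul_fsum _ _ _ _ (S i)) by (intros; rewrite Hl by lia; ring).
  simpl; rewrite <- (lower_inv_row T i j (T_diag i)); ring.
Qed.

End LowerInverse.

Lemma lower_tri_right_inv_unique T X Y : lower_tri T -> lower_tri X -> lower_tri Y ->
  (forall i j, matmul T X i j = idm i j) -> (forall i j, matmul X Y i j = idm i j) ->
  forall i j, T i j = Y i j.
Proof.
  intros HT HX HY TX XY i j.
  transitivity (fsum (S i) (fun l => T i l * idm l j)).
  { rewrite fsum_mul_idm_r; auto. }
  rewrite (fsum_ext _ _ (fun l => fsum (S i) (fun m => T i l * (X l m * Y m j)))).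
  2:{ intros l Hl; rewrite <- XY, (matmul_fsum _ _ _ _ (S i)), fsum_scal_l; auto.
      intros m Hm; rewrite HX by lia; ring. }
  rewrite fsum_swap, (fsum_ext _ _ (fun m => idm i m * Y m j)).
  2:{ intros m Hm; rewrite <- TX, (matmul_fsum _ _ _ _ (S i)), <- fsum_scal_r.
      - apply fsum_ext; intros; ring.
      - intros l Hl; rewrite HT by lia; ring. }
  rewrite fsum_mul_idm_l; auto; intros; lia.
Qed.

Lemma lower_inv_inverse T : lower_tri T -> (forall i, T i i <> 0) ->
  lower_tri (lower_inv T) /\ is_inverse T (lower_inv T).
Proof.
  intros HT Hd. pose proof (lower_inv_lower T Hd) as HX.
  assert (HXd : forall i, lower_inv T i i <> 0)
    by (intros i; rewrite lower_inv_diag; auto; apply Rinv_neq_0_compat; auto).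
  pose proof (lower_tri_right_inv_unique T (lower_inv T) (lower_inv (lower_inv T)) HT HX
    (lower_inv_lower _ HXd) (lower_inv_right T Hd HT) (lower_inv_right _ HXd HX)) as E.
  split; [auto | split; [apply lower_inv_right; auto|]].
  intros i j; rewrite <- (lower_inv_right _ HXd HX i j).
  unfold matmul; apply Series_ext; intros; rewrite E; auto.
Qed.

Lemma upper_inv_inverse U : upper_tri U -> (forall i, U i i <> 0) ->
  upper_tri (upper_inv U) /\ is_inverse U (upper_inv U).
Proof.
  intros HU Hd.
  assert (HT : lower_tri (trans U)) by (intros i j H; apply HU; lia).
  destruct (lower_inv_inverse (trans U) HT Hd) as [HX [E1 E2]].
  split; [intros i j H; apply HX; lia|].
  assert (Hs : forall i j, idm i j = idm j i) by (intros; unfold idm; rewrite Nat.eqb_sym; auto).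
  split; intros i j; rewrite Hs; [rewrite <- E2 | rewrite <- E1];
    unfold matmul, upper_inv, trans; apply Series_ext; intros; ring.
Qed.

(** * The Schur test and exponential decay *)

Lemma exp_le_compat x y : x <= y -> exp x <= exp y.
Proof. intros [H | H]; [left; apply exp_increasing; auto | subst; lra]. Qed.

Lemma Series_term_le a k : (forall j, 0 <= a j) -> ex_series a -> a k <= Series a.
Proof.
  intros Ha Hex; apply Rle_trans with (fsum (S k) a);
    [apply fsum_term_le; auto | apply fsum_le_Series; auto].
Qed.

Lemma ex_series_mul_abs a x : (forall j, 0 <= a j) -> ex_series a ->
  ex_series (fun j => a j * x j ^ 2) -> ex_series (fun j => a j * Rabs (x j)).
Proof.
  intros Ha Hex Hx2.
  apply (@ex_series_le R_AbsRing R_CompleteNormedModule _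
           (fun j => / 2 * a j + / 2 * (a j * x j ^ 2))).
  - intros j; change norm with Rabs.
    rewrite Rabs_pos_eq by (apply Rmult_le_pos; auto using Rabs_pos).
    rewrite <- (pow2_abs (x j)). pose proof (Ha j); pose proof (Rabs_pos (x j)).
    assert (0 <= a j * (Rabs (x j) - 1) ^ 2) by (apply Rmult_le_pos; auto; apply pow2_ge_0).
    nra.
  - exact (ex_series_plus _ _ (ex_series_scal_l _ _ Hex) (ex_series_scal_l _ _ Hx2)).
Qed.

(* Weighted Cauchy-Schwarz, via [2 a |x| <= t a + a x^2 / t] with [t = Series (a |x|) / A]. *)
Lemma Series_mul_abs_sq_le a x A : 0 < A -> (forall j, 0 <= a j) ->
  ex_series a -> Series a <= A -> ex_series (fun j => a j * x j ^ 2) ->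
  Series (fun j => a j * Rabs (x j)) ^ 2 <= A * Series (fun j => a j * x j ^ 2).
Proof.
  intros HA Ha Hex HaA Hx2. pose proof (ex_series_mul_abs a x Ha Hex Hx2) as Hx1.
  set (S := Series (fun j => a j * Rabs (x j))); set (Q := Series (fun j => a j * x j ^ 2)).
  assert (HS : 0 <= S)
    by (apply Series_nonneg; auto; intros; apply Rmult_le_pos; auto using Rabs_pos).
  assert (HQ : 0 <= Q)
    by (apply Series_nonneg; auto; intros; apply Rmult_le_pos; auto; apply pow2_ge_0).
  destruct (Req_dec S 0) as [E|E]; [rewrite E; nra|].
  set (t := S / A). assert (Ht : 0 < t) by (apply Rdiv_lt_0_compat; lra).
  assert (Hpt : forall j, 0 <= 2 * (a j * Rabs (x j)) <= t * a j + / t * (a j * x j ^ 2)).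
  { intros j; pose proof (Ha j); pose proof (Rabs_pos (x j)); split; [nra|].
    assert (0 <= a j * (t - Rabs (x j)) ^ 2 / t)
      by (apply Rdiv_le_0_compat; auto; apply Rmult_le_pos; auto; apply pow2_ge_0).
    replace (t * a j + / t * (a j * x j ^ 2)) with
      (2 * (a j * Rabs (x j)) + a j * (t - Rabs (x j)) ^ 2 / t)
      by (rewrite <- (pow2_abs (x j)); field; lra).
    lra. }
  pose proof (Series_le _ _ Hpt (ex_series_plus _ _ (ex_series_scal_l _ _ Hex)
                                   (ex_series_scal_l _ _ Hx2))) as Hser.
  rewrite Series_scal_l, Series_plus, !Series_scal_l in Hser
    by (exact (ex_series_scal_l _ _ Hex) || exact (ex_series_scal_l _ _ Hx2)).
  fold S Q in Hser.
  assert (2 * S <= S + A / S * Q).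
  { replace S with (t * A) at 2 by (unfold t; field; lra).
    replace (A / S) with (/ t) by (unfold t; field; lra).
    apply Rle_trans with (1 := Hser). apply Rplus_le_compat_r, Rmult_le_compat_l; lra. }
  assert (S * S <= S * (A / S * Q)) by (apply Rmult_le_compat_l; lra).
  replace (S * (A / S * Q)) with (A * Q) in * by (field; lra). nra.
Qed.

Lemma row_apply_sq_le (b a x : vec) Kr : (forall j, 0 <= a j) -> (forall j, Rabs (b j) <= a j) ->
  ex_series a -> Series a <= Kr -> in_l2 x ->
  ex_series (fun j => Rabs (b j) * x j) /\ ex_series (fun j => a j * x j ^ 2) /\
  Series (fun j => Rabs (b j) * x j) ^ 2 <= (Kr + 1) * Series (fun j => a j * x j ^ 2).
Proof.
  intros Ha Hb Hex HaR Hx.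
  assert (HR : 0 <= Kr) by (apply Rle_trans with (Series a); auto using Series_nonneg).
  assert (Hx2 : ex_series (fun j => a j * x j ^ 2)).
  { apply (@ex_series_le R_AbsRing R_CompleteNormedModule _ (fun j => Kr * x j ^ 2));
      [|exact (ex_series_scal_l _ _ Hx)].
    intros j; change norm with Rabs. pose proof (pow2_ge_0 (x j)).
    rewrite Rabs_pos_eq by (apply Rmult_le_pos; auto).
    apply Rmult_le_compat_r; auto. apply Rle_trans with (Series a); auto using Series_term_le. }
  pose proof (ex_series_mul_abs a x Ha Hex Hx2) as Hx1.
  assert (Hbx : forall j, Rabs (Rabs (b j) * x j) <= a j * Rabs (x j))
    by (intros j; rewrite Rabs_mult, Rabs_Rabsolu; apply Rmult_le_compat_r; auto using Rabs_pos).
  assert (Hex1 : ex_series (fun j => Rabs (b j) * x j))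
    by exact (@ex_series_le R_AbsRing R_CompleteNormedModule _ _ Hbx Hx1).
  split; [auto | split; [auto|]].
  rewrite <- pow2_abs. apply Rle_trans with (Series (fun j => a j * Rabs (x j)) ^ 2).
  - apply pow_incr; split; [apply Rabs_pos|].
    eapply Rle_trans; [apply Series_Rabs|].
    + exact (@ex_series_le R_AbsRing R_CompleteNormedModule _ _
               (fun j => ltac:(rewrite Rabs_Rabsolu; apply Hbx)) Hx1).
    + apply Series_le; auto. intros j; split; [apply Rabs_pos | apply Hbx].
  - apply Series_mul_abs_sq_le; auto; lra.
Qed.

Lemma schur_test (X a : mat) Kr Kc :
  (forall i j, 0 <= a i j) -> (forall i j, Rabs (X i j) <= a i j) ->
  (forall i, ex_series (a i) /\ Series (a i) <= Kr) ->
  (forall j, ex_series (fun i => a i j) /\ Series (fun i => a i j) <= Kc) ->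
  bounded_l2 (absm X).
Proof.
  intros Ha HX Hrow Hcol. exists ((Kr + 1) * Kc); intros x Hx.
  set (Q := fun i => Series (fun j => a i j * x j ^ 2)).
  assert (Hi : forall i, ex_series (fun j => absm X i j * x j) /\
             ex_series (fun j => a i j * x j ^ 2) /\ mat_app (absm X) x i ^ 2 <= (Kr + 1) * Q i)
    by (intros i; apply (row_apply_sq_le (X i)); auto; apply Hrow).
  assert (HQ : forall i, 0 <= Q i)
    by (intros i; apply Series_nonneg;
        [intros; apply Rmult_le_pos; auto; apply pow2_ge_0 | apply Hi]).
  assert (HsumQ : ex_series Q /\ Series Q <= Kc * l2norm2 x).
  { apply ex_series_fsum_bounded; auto. intros N.
    destruct (Series_fsum_swap N (fun i j => a i j * x j ^ 2)) as [E1 E2]; [apply Hi|].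
    unfold Q, l2norm2; rewrite <- E2, <- Series_scal_l.
    apply Series_le; [|exact (ex_series_scal_l _ _ Hx)].
    intros j; split; [apply fsum_nonneg; intros; apply Rmult_le_pos; auto; apply pow2_ge_0|].
    rewrite fsum_scal_r; apply Rmult_le_compat_r; [apply pow2_ge_0|].
    destruct (Hcol j) as [Hcj Hcb]; eapply Rle_trans; [apply fsum_le_Series; auto | exact Hcb]. }
  destruct HsumQ as [HQex HQle].
  assert (HKr : 0 <= Kr) by (destruct (Hrow 0%nat) as [E F];
    apply Rle_trans with (Series (a 0%nat)); auto; apply Series_nonneg; auto).
  assert (Hdom : forall i, 0 <= mat_app (absm X) x i ^ 2 <= (Kr + 1) * Q i)
    by (intros i; split; [apply pow2_ge_0 | apply Hi]).
  assert (HQex' : ex_series (fun i => (Kr + 1) * Q i)) by exact (ex_series_scal_l _ _ HQex).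
  split; [apply Hi | split].
  - apply (@ex_series_le R_AbsRing R_CompleteNormedModule _ (fun i => (Kr + 1) * Q i));
      [|exact HQex'].
    intros i; change norm with Rabs; destruct (Hdom i); rewrite Rabs_pos_eq; auto.
  - unfold l2norm2 at 1. eapply Rle_trans; [apply (Series_le _ _ Hdom HQex')|].
    rewrite Series_scal_l, Rmult_assoc. apply Rmult_le_compat_l; [lra | exact HQle].
Qed.

Definition exp_row_bound (d : nat -> nat -> R) (a K : R) : Prop :=
  forall i, ex_series (fun j => exp (- a * d i j)) /\ Series (fun j => exp (- a * d i j)) <= K.

Definition exp_decay (d : nat -> nat -> R) (a : R) (X : mat) : Prop :=
  exists B, 0 <= B /\ forall i j, Rabs (X i j) <= B * exp (- a * d i j).

Lemma exp_row_bound_fsum d a K n i : exp_row_bound d a K ->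
  fsum n (fun j => exp (- a * d i j)) <= K.
Proof.
  intros HK; destruct (HK i) as [Hex HS]; eapply Rle_trans; [|exact HS].
  apply fsum_le_Series; auto; intros; left; apply exp_pos.
Qed.

Lemma exp_decay_weaken d a b X : (forall i j, 0 <= d i j) -> b <= a ->
  exp_decay d a X -> exp_decay d b X.
Proof.
  intros Hd Hba [B [HB HX]]; exists B; split; auto; intros i j.
  eapply Rle_trans; [apply HX|]; apply Rmult_le_compat_l; auto.
  apply exp_le_compat; pose proof (Hd i j); nra.
Qed.

Lemma exp_decay_ext d a X Y : (forall i j, X i j = Y i j) -> exp_decay d a X -> exp_decay d a Y.
Proof. intros E [B [HB HX]]; exists B; split; auto; intros i j; rewrite <- E; auto. Qed.

Lemma exp_decay_bounded_l2 d a X : is_metric d -> summable_metric d -> 0 < a ->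
  exp_decay d a X -> bounded_l2 (absm X).
Proof.
  intros (_ & _ & Hsym & _) Hsum Ha [B [HB HX]]. destruct (Hsum a Ha) as [K HK].
  assert (Hrow : forall i, ex_series (fun j => B * exp (- a * d i j)) /\
                           Series (fun j => B * exp (- a * d i j)) <= B * K).
  { intros i; destruct (HK i) as [Hex HS]; split; [exact (ex_series_scal_l _ _ Hex)|].
    rewrite Series_scal_l; apply Rmult_le_compat_l; auto. }
  apply (schur_test X (fun i j => B * exp (- a * d i j)) (B * K) (B * K)); auto.
  - intros; pose proof (exp_pos (- a * d i j)); nra.
  - intros j; destruct (Hrow j) as [Hex HS].
    split; [eapply ex_series_ext | rewrite <- HS; right; apply Series_ext];
      [|exact Hex|]; intros i; rewrite Hsym; auto.
Qed.

Lemma exp_decay_fsum_mul d a P Q (N : nat -> nat -> nat) : is_metric d -> summable_metric d ->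
  0 < a -> exp_decay d a P -> exp_decay d a Q ->
  exp_decay d (a / 2) (fun i j => fsum (N i j) (fun k => P i k * Q k j)).
Proof.
  intros (Hd0 & _ & _ & Htri) Hsum Ha [BP [HBP HP]] [BQ [HBQ HQ]].
  destruct (Hsum (a / 2) ltac:(lra)) as [K HK].
  assert (HK0 : 0 <= K)
    by (apply Rle_trans with (fsum 0 (fun j => exp (- (a / 2) * d 0%nat j)));
        [simpl; lra | apply exp_row_bound_fsum; auto]).
  exists (BP * BQ * K); split; [apply Rmult_le_pos; auto; nra|]; intros i j.
  eapply Rle_trans; [apply fsum_abs|].
  apply Rle_trans with
    (fsum (N i j) (fun k => BP * BQ * (exp (- (a / 2) * d i j) * exp (- (a / 2) * d i k)))).
  - apply fsum_le; intros k _; rewrite Rabs_mult.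
    apply Rle_trans with (BP * exp (- a * d i k) * (BQ * exp (- a * d k j))).
    { apply Rmult_le_compat; auto using Rabs_pos. }
    replace (BP * exp (- a * d i k) * (BQ * exp (- a * d k j)))
      with (BP * BQ * (exp (- a * d i k) * exp (- a * d k j))) by ring.
    apply Rmult_le_compat_l; [nra|].
    rewrite <- !exp_plus; apply exp_le_compat.
    pose proof (Htri i k j); pose proof (Hd0 k j); pose proof (Hd0 i k); nra.
  - rewrite fsum_scal_l, fsum_scal_l; pose proof (exp_pos (- (a / 2) * d i j)).
    replace (BP * BQ * K * exp (- (a / 2) * d i j))
      with (BP * BQ * (exp (- (a / 2) * d i j) * K)) by ring.
    apply Rmult_le_compat_l; [nra|].
    apply Rmult_le_compat_l; [lra | apply exp_row_bound_fsum; auto].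
Qed.

(** * The Combes-Thomas estimate on finite sections *)

Lemma Rabs_mul_le_half_sq e a b : Rabs (e * a * b) <= Rabs e * (a ^ 2 + b ^ 2) / 2.
Proof.
  rewrite !Rabs_mult, <- (pow2_abs a), <- (pow2_abs b).
  pose proof (Rabs_pos e); pose proof (pow2_ge_0 (Rabs a - Rabs b)).
  assert (Rabs a * Rabs b <= (Rabs a ^ 2 + Rabs b ^ 2) / 2) by nra.
  unfold Rdiv in *; rewrite Rmult_assoc, (Rmult_assoc (Rabs e)); apply Rmult_le_compat_l; auto.
Qed.

(* Split [|E_ij x_i x_j| <= |E_ij| (x_i^2 + x_j^2) / 2] and sum by rows and by columns. *)
Lemma qform_abs_le E n e x :
  (forall i, fsum n (fun j => Rabs (E i j)) <= e) ->
  (forall j, fsum n (fun i => Rabs (E i j)) <= e) ->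
  Rabs (qform E n x) <= e * sqnorm n x.
Proof.
  intros Hr Hc. unfold qform, sqnorm.
  eapply Rle_trans; [apply fsum_abs|].
  eapply Rle_trans; [apply fsum_le; intros i _; rewrite <- fsum_scal_r; apply fsum_abs|].
  eapply Rle_trans.
  { apply fsum_le; intros i _; apply fsum_le; intros j _.
    replace (E i j * x j * x i) with (E i j * x i * x j) by ring. apply Rabs_mul_le_half_sq. }
  rewrite (fsum_ext n _ (fun i => x i ^ 2 * fsum n (fun j => Rabs (E i j)) / 2
                                  + fsum n (fun j => Rabs (E i j) * x j ^ 2 / 2))).
  2:{ intros i _; unfold Rdiv; rewrite <- fsum_scal_l, <- !fsum_scal_r, <- fsum_plus.
      apply fsum_ext; intros; field. }
  rewrite fsum_plus, fsum_swap.
  rewrite (fsum_ext n (fun j => fsum n (fun i => Rabs (E i j) * x j ^ 2 / 2))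
                      (fun j => x j ^ 2 * fsum n (fun i => Rabs (E i j)) / 2)).
  2:{ intros j _; unfold Rdiv; rewrite <- fsum_scal_l, <- fsum_scal_r.
      apply fsum_ext; intros; ring. }
  assert (Hhalf : forall (F : nat -> R), (forall i, F i <= e) ->
            fsum n (fun i => x i ^ 2 * F i / 2) <= e / 2 * fsum n (fun i => x i ^ 2)).
  { intros F HF; rewrite <- fsum_scal_l; apply fsum_le; intros i _.
    pose proof (pow2_ge_0 (x i)); pose proof (HF i); unfold Rdiv.
    replace (e * / 2 * x i ^ 2) with (x i ^ 2 * e * / 2) by ring.
    apply Rmult_le_compat_r; [lra | apply Rmult_le_compat_l; auto]. }
  pose proof (Hhalf _ Hr); pose proof (Hhalf _ Hc); lra.
Qed.

Lemma coercive_perturb A B n c e : coercive A n c ->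
  (forall i, fsum n (fun j => Rabs (B i j - A i j)) <= e) ->
  (forall j, fsum n (fun i => Rabs (B i j - A i j)) <= e) ->
  coercive B n (c - e).
Proof.
  intros HA Hr Hc x.
  assert (E : qform B n x = qform A n x + qform (fun i j => B i j - A i j) n x).
  { unfold qform; rewrite <- fsum_plus; apply fsum_ext; intros i _.
    rewrite <- Rmult_plus_distr_r, <- fsum_plus; f_equal; apply fsum_ext; intros; ring. }
  pose proof (qform_abs_le _ n e x Hr Hc) as HE; apply Rabs_le_between in HE.
  specialize (HA x); rewrite E; lra.
Qed.

Lemma qform_solution B n z s m : (m < n)%nat ->
  (forall i, (i < n)%nat -> fsum n (fun k => B i k * z k) = s * idm i m) ->
  qform B n z = s * z m.
Proof.
  intros Hm Hsys; unfold qform.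
  rewrite (fsum_ext n _ (fun i => s * z i * idm i m))
    by (intros i Hi; rewrite Hsys by auto; ring).
  apply fsum_mul_idm_r; intros; lia.
Qed.

Lemma coercive_solution_bound B n c z s m : 0 < c -> coercive B n c -> (m < n)%nat ->
  (forall i, (i < n)%nat -> fsum n (fun k => B i k * z k) = s * idm i m) ->
  forall k, (k < n)%nat -> Rabs (z k) <= Rabs s / c.
Proof.
  intros Hc HB Hm Hsys k Hk.
  specialize (HB z); rewrite (qform_solution B n z s m Hm Hsys) in HB.
  assert (Hsq : forall l, (l < n)%nat -> Rabs (z l) ^ 2 <= sqnorm n z)
    by (intros l Hl; rewrite pow2_abs; apply (fsum_term_le n (fun l => z l ^ 2)); auto;
        intros; apply pow2_ge_0).
  pose proof (Hsq m Hm); pose proof (Hsq k Hk).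
  assert (Hsz : s * z m <= Rabs s * Rabs (z m)) by (rewrite <- Rabs_mult; apply Rle_abs).
  pose proof (Rabs_pos s); pose proof (Rabs_pos (z m)); pose proof (Rabs_pos (z k)).
  assert (Hzm : c * Rabs (z m) <= Rabs s).
  { destruct (Req_dec (Rabs (z m)) 0) as [E|E]; [rewrite E; lra|]. nra. }
  assert (Hnorm : c * sqnorm n z <= Rabs s * (Rabs s / c)).
  { apply Rle_trans with (Rabs s * Rabs (z m)); [lra|].
    apply Rmult_le_compat_l; auto. apply Rmult_le_reg_l with c; auto.
    replace (c * (Rabs s / c)) with (Rabs s) by (field; lra); lra. }
  assert (Rabs (z k) ^ 2 <= (Rabs s / c) ^ 2).
  { apply Rmult_le_reg_l with c; auto. apply Rle_trans with (c * sqnorm n z); [nra|].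
    replace (c * (Rabs s / c) ^ 2) with (Rabs s * (Rabs s / c)) by (field; lra); auto. }
  assert (0 <= Rabs s / c) by (apply Rdiv_le_0_compat; lra).
  nra.
Qed.

Lemma coercive_solution_rhs_le A n c y r m : 0 < c -> coercive A n c -> (m < n)%nat -> y m = 1 ->
  (forall i, (i < n)%nat -> fsum n (fun k => A i k * y k) = r * idm i m) ->
  r <= fsum n (fun k => A m k ^ 2) / c.
Proof.
  intros Hc HA Hm Hy Hsys.
  specialize (HA y); rewrite (qform_solution A n y r m Hm Hsys), Hy in HA.
  assert (Hr : r = fsum n (fun k => A m k * y k))
    by (rewrite Hsys by auto; unfold idm; rewrite Nat.eqb_refl; ring).
  assert (Hle : fsum n (fun k => A m k * y k)
                <= c / 2 * sqnorm n y + fsum n (fun k => A m k ^ 2) / (2 * c)).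
  { unfold sqnorm, Rdiv; rewrite <- fsum_scal_l, <- fsum_scal_r, <- fsum_plus.
    apply fsum_le; intros k _.
    assert (0 <= (c * y k - A m k) ^ 2 * / (2 * c))
      by (apply Rmult_le_pos; [apply pow2_ge_0 | left; apply Rinv_0_lt_compat; lra]).
    replace (c * / 2 * y k ^ 2 + A m k ^ 2 * / (2 * c))
      with (A m k * y k + (c * y k - A m k) ^ 2 * / (2 * c)) by (field; lra).
    lra. }
  set (N := fsum n (fun k => A m k ^ 2)) in *.
  assert (N / (2 * c) = N / c / 2) by (field; lra).
  lra.
Qed.

Lemma Rabs_exp_sub_1_le u : Rabs (exp u - 1) <= exp (Rabs u) - 1.
Proof.
  destruct (Rle_or_lt 0 u) as [H|H].
  - rewrite (Rabs_pos_eq u H). pose proof (exp_le_compat 0 u H); rewrite exp_0 in *.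
    rewrite Rabs_pos_eq; lra.
  - rewrite (Rabs_left u H). pose proof (exp_increasing u 0 H); rewrite exp_0 in *.
    pose proof (exp_pos u). rewrite Rabs_left, exp_Ropp by lra.
    assert (Hinv : exp u * / exp u = 1) by (field; lra).
    assert (0 <= (exp u - 1) ^ 2) by apply pow2_ge_0.
    nra.
Qed.

Lemma exp_sub_1_le_mul x : exp x - 1 <= x * exp x.
Proof.
  pose proof (exp_ineq1_le (- x)); pose proof (exp_pos x).
  assert (exp (- x) * exp x = 1) by (rewrite <- exp_plus, Rplus_opp_l; apply exp_0).
  nra.
Qed.

Lemma mul_exp_neg_le x b : 0 < b -> x * exp (- b * x) <= / b.
Proof.
  intros Hb. pose proof (exp_ineq1_le (b * x)); pose proof (exp_pos (- b * x)).
  assert (exp (- b * x) * exp (b * x) = 1)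
    by (rewrite <- exp_plus; replace (- b * x + b * x) with 0 by ring; apply exp_0).
  apply Rmult_le_reg_l with b; auto. rewrite Rinv_r by lra. nra.
Qed.

Lemma exp_weight_gain_le D a eps : 0 <= D -> 0 < a -> 0 < eps -> eps <= a / 4 ->
  exp (- a * D) * (exp (eps * D) - 1) <= eps * (4 / a) * exp (- (a / 2) * D).
Proof.
  intros HD Ha He Hea.
  pose proof (exp_pos (- a * D)); pose proof (exp_pos (- (a / 2) * D)).
  pose proof (mul_exp_neg_le D (a / 4) ltac:(lra)) as HDe.
  replace (/ (a / 4)) with (4 / a) in HDe by (field; lra).
  assert (Hexp : exp (- a * D) * exp (eps * D) <= exp (- (a / 4) * D) * exp (- (a / 2) * D))
    by (rewrite <- !exp_plus; apply exp_le_compat; nra).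
  apply Rle_trans with (eps * D * (exp (- a * D) * exp (eps * D))).
  { pose proof (exp_sub_1_le_mul (eps * D)); nra. }
  apply Rle_trans with (eps * (D * exp (- (a / 4) * D)) * exp (- (a / 2) * D)).
  { pose proof (Rmult_le_compat_l (eps * D) _ _ ltac:(nra) Hexp). nra. }
  apply Rmult_le_compat_r; [lra | apply Rmult_le_compat_l; lra].
Qed.

Lemma metric_reverse_triangle d i j m : is_metric d -> Rabs (d i m - d j m) <= d i j.
Proof.
  intros (_ & _ & Hsym & Htri). pose proof (Htri i j m); pose proof (Htri j i m).
  rewrite (Hsym j i) in *. apply Rabs_le; lra.
Qed.

Lemma weight_perturbation_le d A C a eps i j m : is_metric d -> 0 < a -> 0 < eps -> eps <= a / 4 ->
  Rabs (A i j) <= C * exp (- a * d i j) ->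
  Rabs (A i j * exp (eps * (d i m - d j m)) - A i j)
  <= C * (eps * (4 / a)) * exp (- (a / 2) * d i j).
Proof.
  intros Hd Ha He Hea HA.
  replace (A i j * exp (eps * (d i m - d j m)) - A i j)
    with (A i j * (exp (eps * (d i m - d j m)) - 1)) by ring.
  rewrite Rabs_mult.
  assert (Hw : Rabs (exp (eps * (d i m - d j m)) - 1) <= exp (eps * d i j) - 1).
  { eapply Rle_trans; [apply Rabs_exp_sub_1_le|]. apply Rplus_le_compat_r, exp_le_compat.
    rewrite Rabs_mult, Rabs_pos_eq by lra.
    apply Rmult_le_compat_l; [lra | apply metric_reverse_triangle; auto]. }
  assert (Hdij : 0 <= d i j) by (destruct Hd; auto).
  pose proof (exp_weight_gain_le (d i j) a eps Hdij Ha He Hea).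
  pose proof (Rabs_pos (A i j)); pose proof (Rabs_pos (exp (eps * (d i m - d j m)) - 1)).
  apply Rle_trans with (C * exp (- a * d i j) * (exp (eps * d i j) - 1)).
  - apply Rmult_le_compat; auto.
  - assert (0 <= C) by (pose proof (exp_pos (- a * d i j)); nra).
    rewrite Rmult_assoc, (Rmult_assoc C); apply Rmult_le_compat_l; lra.
Qed.

Section CombesThomas.

Variables (d : nat -> nat -> R) (A : mat) (C a K c eps : R).
Hypotheses (Hd : is_metric d) (Hc : 0 < c) (HC : 0 < C) (Ha : 0 < a) (HK : 0 < K)
  (HrowK : exp_row_bound d (a / 2) K) (HA : forall i j, Rabs (A i j) <= C * exp (- a * d i j))
  (Heps : 0 < eps) (Heps_a : eps <= a / 4) (Heps_c : eps <= c * a / (8 * C * K)).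

Lemma weighted_coercive n m : coercive A n c ->
  coercive (fun i j => A i j * exp (eps * (d i m - d j m))) n (c / 2).
Proof.
  intros HAc. replace (c / 2) with (c - c / 2) by field.
  assert (Hgain : C * (eps * (4 / a)) * K <= c / 2).
  { apply Rmult_le_compat_l with (r := 8 * C * K / a) in Heps_c;
      [|apply Rdiv_le_0_compat; nra].
    replace (8 * C * K / a * (c * a / (8 * C * K))) with c in Heps_c by (field; lra).
    replace (C * (eps * (4 / a)) * K) with (8 * C * K / a * eps / 2) by (field; lra). lra. }
  assert (Hsum : forall i,
    fsum n (fun j => C * (eps * (4 / a)) * exp (- (a / 2) * d i j)) <= c / 2).
  { intros i; rewrite fsum_scal_l. eapply Rle_trans; [|exact Hgain].
    apply Rmult_le_compat_l; [|apply exp_row_bound_fsum; auto].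
    apply Rmult_le_pos; [lra | apply Rmult_le_pos; [lra | apply Rdiv_le_0_compat; lra]]. }
  destruct Hd as (_ & _ & Hsym & _).
  apply coercive_perturb with A; auto.
  - intros i; eapply Rle_trans; [|apply (Hsum i)].
    apply fsum_le; intros j _; apply weight_perturbation_le; auto.
  - intros j; eapply Rle_trans; [|apply (Hsum j)].
    apply fsum_le; intros i _; rewrite (Hsym j i); apply weight_perturbation_le; auto.
Qed.

(* [z_k = exp (eps d(k, m)) y_k] solves the conjugated system with the same right-hand side,
   because the weight is 1 at [m]. *)
Lemma section_solution_decay n m r y : coercive A n c -> (m < n)%nat ->
  (forall i, (i < n)%nat -> fsum n (fun k => A i k * y k) = r * idm i m) ->
  forall k, (k < n)%nat -> Rabs (y k) <= 2 * Rabs r / c * exp (- eps * d k m).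
Proof.
  intros HAc Hm Hsys k Hk.
  assert (Hmm : d m m = 0) by (destruct Hd as (_ & H & _); apply H; auto).
  set (z := fun l => exp (eps * d l m) * y l).
  assert (Hwsys : forall i, (i < n)%nat ->
    fsum n (fun l => A i l * exp (eps * (d i m - d l m)) * z l) = r * idm i m).
  { intros i Hi. rewrite (fsum_ext n _ (fun l => exp (eps * d i m) * (A i l * y l))).
    - rewrite fsum_scal_l, Hsys by auto. unfold idm.
      destruct (Nat.eqb_spec i m) as [->|]; [rewrite Hmm, Rmult_0_r, exp_0|]; ring.
    - intros l _; unfold z.
      replace (eps * (d i m - d l m)) with (eps * d i m + - (eps * d l m)) by ring.
      rewrite exp_plus, exp_Ropp. field. apply Rgt_not_eq, exp_pos. }
  pose proof (coercive_solution_bound _ n (c / 2) z r m ltac:(lra)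
                (weighted_coercive n m HAc) Hm Hwsys k Hk) as Hz.
  unfold z in Hz; rewrite Rabs_mult, Rabs_pos_eq in Hz by (left; apply exp_pos).
  replace (Rabs r / (c / 2)) with (2 * Rabs r / c) in Hz by (field; lra).
  replace (Rabs (y k)) with (exp (- eps * d k m) * (exp (eps * d k m) * Rabs (y k))).
  - rewrite Rmult_comm; apply Rmult_le_compat_r; [left; apply exp_pos | exact Hz].
  - rewrite <- Rmult_assoc, <- exp_plus. replace (- eps * d k m + eps * d k m) with 0 by ring.
    rewrite exp_0; ring.
Qed.

End CombesThomas.

(** * The LU factors of an elliptic Jaffard matrix *)

Lemma fsum_mul_upper_inv M L U X : lower_tri L -> upper_tri U -> upper_tri X ->
  (forall i j, M i j = matmul L U i j) -> (forall i j, matmul U X i j = idm i j) ->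
  forall i j, fsum (S j) (fun k => M i k * X k j) = L i j.
Proof.
  intros HL HU HX HM UX i j.
  rewrite (fsum_ext (S j) _ (fun k => fsum (S i) (fun l => L i l * (U l k * X k j)))).
  2:{ intros k _; rewrite HM, (matmul_fsum _ _ _ _ (S i)), <- fsum_scal_r.
      - apply fsum_ext; intros; ring.
      - intros l Hl; rewrite HL by lia; ring. }
  rewrite fsum_swap, (fsum_ext (S i) _ (fun l => L i l * idm l j)).
  - apply fsum_mul_idm_r; intros; apply HL; lia.
  - intros l _; rewrite fsum_scal_l, <- UX, (matmul_fsum _ _ _ _ (S j)); auto.
    intros k Hk; rewrite HX by lia; ring.
Qed.

Lemma fsum_lower_inv_mul M L U X : lower_tri L -> upper_tri U -> lower_tri X ->
  (forall i j, M i j = matmul L U i j) -> (forall i j, matmul X L i j = idm i j) ->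
  forall i j, fsum (S i) (fun k => X i k * M k j) = U i j.
Proof.
  intros HL HU HX HM XL i j.
  rewrite (fsum_ext (S i) _ (fun k => fsum (S j) (fun l => X i k * L k l * U l j))).
  2:{ intros k _; rewrite HM, (matmul_fsum _ _ _ _ (S j)), <- fsum_scal_l.
      - apply fsum_ext; intros; ring.
      - intros l Hl; rewrite HU by lia; ring. }
  rewrite fsum_swap, (fsum_ext (S j) _ (fun l => idm i l * U l j)).
  - apply (fsum_mul_idm_l _ _ (fun l => U l j)); intros; apply HU; lia.
  - intros l _; rewrite fsum_scal_r, <- XL, (matmul_fsum _ _ _ _ (S i)); auto.
    intros k Hk; rewrite HX by lia; ring.
Qed.

Lemma Lfac_inverse M :
  lower_tri (lower_inv (Lfac M)) /\ is_inverse (Lfac M) (lower_inv (Lfac M)).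
Proof. apply lower_inv_inverse; [apply Lfac_lower | intros; rewrite Lfac_diag; lra]. Qed.

Section EllipticLU.

Variables (M : mat) (c : R).
Hypotheses (Hc : 0 < c) (Hell : elliptic M c).

Lemma elliptic_pivot_ge i : Ufac M i i >= c.
Proof.
  rewrite Ufac_diag; apply coercive_from_diag, coercive_from_schur; auto.
  intros n x _; apply elliptic_coercive; auto.
Qed.

Lemma elliptic_LU i j : M i j = matmul (Lfac M) (Ufac M) i j.
Proof.
  apply Lfac_Ufac; intros k; pose proof (elliptic_pivot_ge k); rewrite Ufac_diag in *; lra.
Qed.

Lemma elliptic_Ufac_inverse :
  upper_tri (upper_inv (Ufac M)) /\ is_inverse (Ufac M) (upper_inv (Ufac M)).
Proof.
  apply upper_inv_inverse; [apply Ufac_upper|].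
  intros i; pose proof (elliptic_pivot_ge i); lra.
Qed.

Lemma elliptic_M_upper_inv i j :
  fsum (S j) (fun k => M i k * upper_inv (Ufac M) k j) = Lfac M i j.
Proof.
  destruct elliptic_Ufac_inverse as [HX [UX _]].
  apply fsum_mul_upper_inv with (Ufac M); auto using Lfac_lower, Ufac_upper, elliptic_LU.
Qed.

Lemma elliptic_lower_inv_M i j :
  fsum (S i) (fun k => lower_inv (Lfac M) i k * M k j) = Ufac M i j.
Proof.
  destruct (Lfac_inverse M) as [HX [_ XL]].
  apply fsum_lower_inv_mul with (Lfac M); auto using Lfac_lower, Ufac_upper, elliptic_LU.
Qed.

Lemma elliptic_upper_inv_column j i : (i < S j)%nat ->
  fsum (S j) (fun k => M i k * upper_inv (Ufac M) k j) = 1 * idm i j.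
Proof.
  intros Hi; rewrite elliptic_M_upper_inv.
  unfold idm; destruct (Nat.eqb_spec i j) as [->|];
    [rewrite Lfac_diag | rewrite Lfac_lower by lia]; ring.
Qed.

Lemma elliptic_lower_inv_row i j : (j < S i)%nat ->
  fsum (S i) (fun k => trans M j k * lower_inv (Lfac M) i k) = Ufac M i i * idm j i.
Proof.
  intros Hj; unfold trans.
  rewrite (fsum_ext _ _ (fun k => lower_inv (Lfac M) i k * M k j)) by (intros; ring).
  rewrite elliptic_lower_inv_M.
  unfold idm; destruct (Nat.eqb_spec j i) as [->|]; [|rewrite Ufac_upper by lia]; ring.
Qed.

End EllipticLU.

Section InverseDecay.

Variables (d : nat -> nat -> R) (M : mat) (c C a K : R).
Hypotheses (Hd : is_metric d) (Hc : 0 < c) (Hell : elliptic M c) (HC : 0 < C) (Ha : 0 < a)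
  (HK : 0 < K) (HrowK : exp_row_bound d (a / 2) K)
  (HM : forall i j, Rabs (M i j) <= C * exp (- a * d i j)).

Lemma elliptic_pivot_le i : Ufac M i i <= C * C * K / c.
Proof.
  destruct (Lfac_inverse M) as [HX _].
  destruct Hd as (Hd0 & _ & Hsym & _).
  eapply Rle_trans.
  - apply (coercive_solution_rhs_le (trans M) (S i) c (fun k => lower_inv (Lfac M) i k)); auto.
    + apply coercive_trans, elliptic_coercive; auto.
    + rewrite lower_inv_diag, Lfac_diag; [apply Rinv_1 | intros; rewrite Lfac_diag; lra].
    + apply (elliptic_lower_inv_row M c); auto.
  - unfold Rdiv; apply Rmult_le_compat_r; [left; apply Rinv_0_lt_compat; auto|].
    apply Rle_trans with (fsum (S i) (fun k => C * C * exp (- (a / 2) * d i k))).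
    2:{ rewrite fsum_scal_l; apply Rmult_le_compat_l; [nra | apply exp_row_bound_fsum; auto]. }
    apply fsum_le; intros k _; unfold trans. rewrite <- pow2_abs.
    apply Rle_trans with ((C * exp (- a * d i k)) ^ 2).
    { apply pow_incr; split; [apply Rabs_pos | rewrite Hsym; apply HM]. }
    replace ((C * exp (- a * d i k)) ^ 2) with (C * C * exp (- a * d i k + - a * d i k))
      by (rewrite exp_plus; ring).
    apply Rmult_le_compat_l; [nra | apply exp_le_compat; pose proof (Hd0 i k); nra].
Qed.

Variable eps : R.
Hypotheses (Heps : 0 < eps) (Heps_a : eps <= a / 4) (Heps_c : eps <= c * a / (8 * C * K)).

Lemma upper_inv_decay : exp_decay d eps (upper_inv (Ufac M)).
Proof.
  destruct (elliptic_Ufac_inverse M c Hc Hell) as [HX _].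
  exists (2 / c); split; [apply Rdiv_le_0_compat; lra|]; intros k j.
  destruct (Nat.le_gt_cases k j) as [Hkj | Hjk].
  - replace (2 / c) with (2 * Rabs 1 / c) by (rewrite Rabs_pos_eq; lra).
    apply (section_solution_decay d M C a K c eps) with
      (n := S j) (m := j) (r := 1) (y := fun k => upper_inv (Ufac M) k j); try lia; auto.
    + exact (elliptic_coercive M c Hell (S j)).
    + apply (elliptic_upper_inv_column M c); auto.
  - rewrite HX, Rabs_R0 by lia. pose proof (exp_pos (- eps * d k j)).
    apply Rmult_le_pos; [apply Rdiv_le_0_compat|]; lra.
Qed.

Lemma lower_inv_decay : exp_decay d eps (lower_inv (Lfac M)).
Proof.
  destruct (Lfac_inverse M) as [HX _].
  pose proof Hd as (Hd0 & _ & Hsym & _).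
  assert (HCK : 0 <= C * C * K / c) by (apply Rdiv_le_0_compat; [nra | lra]).
  exists (2 * (C * C * K / c) / c); split; [apply Rdiv_le_0_compat; lra|]; intros i k.
  destruct (Nat.le_gt_cases k i) as [Hki | Hik].
  - rewrite Hsym. eapply Rle_trans.
    + apply (section_solution_decay d (trans M) C a K c eps) with
        (n := S i) (m := i) (r := Ufac M i i) (y := fun k => lower_inv (Lfac M) i k);
        try lia; auto.
      * intros; unfold trans; rewrite Hsym; apply HM.
      * exact (coercive_trans _ _ _ (elliptic_coercive M c Hell (S i))).
      * apply (elliptic_lower_inv_row M c); auto.
    + pose proof (elliptic_pivot_ge M c Hc Hell i); pose proof (elliptic_pivot_le i).
      apply Rmult_le_compat_r; [left; apply exp_pos|].
      unfold Rdiv; apply Rmult_le_compat_r; [left; apply Rinv_0_lt_compat; lra|].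
      rewrite Rabs_pos_eq; lra.
  - rewrite HX, Rabs_R0 by lia. pose proof (exp_pos (- eps * d i k)).
    apply Rmult_le_pos; [apply Rdiv_le_0_compat|]; lra.
Qed.

End InverseDecay.

Lemma elliptic_LU_exp_decay d gamma M c : is_metric d -> summable_metric d -> 0 < gamma ->
  jaffard d gamma M -> 0 < c -> elliptic M c ->
  exists eps, 0 < eps /\
    exp_decay d eps (Lfac M) /\ exp_decay d eps (Ufac M) /\
    exp_decay d eps (lower_inv (Lfac M)) /\ exp_decay d eps (upper_inv (Ufac M)).
Proof.
  intros Hd Hsum Hg HJ Hc Hell. pose proof Hd as (Hd0 & _).
  set (a := gamma / 2); assert (Ha : 0 < a) by (unfold a; lra).
  destruct (HJ a ltac:(unfold a; lra)) as [C [HC HM]].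
  destruct (Hsum (a / 2) ltac:(lra)) as [K0 HK0].
  set (K := Rmax 1 K0); assert (HK1 : 0 < K) by (pose proof (Rmax_l 1 K0); unfold K; lra).
  assert (HK : exp_row_bound d (a / 2) K).
  { intros i; destruct (HK0 i); split; [auto | eapply Rle_trans; [eauto | apply Rmax_r]]. }
  set (eps := Rmin (a / 4) (c * a / (8 * C * K))).
  assert (Heps : 0 < eps)
    by (apply Rmin_pos; [lra|];
        apply Rdiv_lt_0_compat; [nra | repeat apply Rmult_lt_0_compat; lra]).
  assert (Heps_a : eps <= a / 4) by apply Rmin_l.
  assert (Heps_c : eps <= c * a / (8 * C * K)) by apply Rmin_r.
  pose proof (upper_inv_decay d M c C a K Hd Hc Hell HC Ha HK1 HK HM eps Heps Heps_a Heps_c) as DUi.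
  pose proof (lower_inv_decay d M c C a K Hd Hc Hell HC Ha HK1 HK HM eps Heps Heps_a Heps_c) as DLi.
  assert (DM : exp_decay d eps M).
  { apply exp_decay_weaken with a; [auto | lra | exists C; split; [lra | auto]]. }
  exists (eps / 2); split; [lra|].
  split; [|split; [|split]].
  - apply (exp_decay_ext d _ (fun i j => fsum (S j) (fun k => M i k * upper_inv (Ufac M) k j)));
      [intros; apply (elliptic_M_upper_inv M c); auto|].
    apply exp_decay_fsum_mul with (N := fun i j => S j); auto.
  - apply (exp_decay_ext d _ (fun i j => fsum (S i) (fun k => lower_inv (Lfac M) i k * M k j)));
      [intros; apply (elliptic_lower_inv_M M c); auto|].
    apply exp_decay_fsum_mul with (N := fun i j => S i); auto.
  - apply exp_decay_weaken with eps; auto; lra.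
  - apply exp_decay_weaken with eps; auto; lra.
Qed.

Theorem theorem3p11 (d : nat -> nat -> R) (gamma : R) (M : mat)
  (Hd : is_metric d) (Hsum : summable_metric d) (Hgamma : 0 < gamma)
  (HJ : jaffard d gamma M)
  (Hell : exists Cell, 0 < Cell /\ elliptic M Cell) :
  exists L U Linv Uinv : mat,
    lower_tri L /\ upper_tri U /\
    (forall i j, M i j = matmul L U i j) /\
    lower_tri Linv /\ is_inverse L Linv /\
    upper_tri Uinv /\ is_inverse U Uinv /\
    bounded_l2 (absm L) /\ bounded_l2 (absm U) /\
    bounded_l2 (absm Linv) /\ bounded_l2 (absm Uinv).
Proof.
  destruct Hell as [c [Hc Hell]].
  destruct (Lfac_inverse M) as [HLi HLinv].
  destruct (elliptic_Ufac_inverse M c Hc Hell) as [HUi HUinv].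
  destruct (elliptic_LU_exp_decay d gamma M c) as (eps & Heps & DL & DU & DLi & DUi); auto.
  exists (Lfac M), (Ufac M), (lower_inv (Lfac M)), (upper_inv (Ufac M)).
  split; [apply Lfac_lower|]. split; [apply Ufac_upper|].
  split; [apply (elliptic_LU M c); auto|].
  do 4 (split; [assumption|]).
  split; [|split; [|split]]; eapply exp_decay_bounded_l2; eauto.
Qed.
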